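(* There is an $\mathcal{A}$-algebra isomorphism $\widehat{H}_{r,n}\xrightarrow{\sim}\widehat{E}_{r,n}$.
   Context: Let $r,n\ge1$, $\zeta=e^{2\pi i/r}$, $\zeta_k:=\zeta^{k-1}$, $q$ an indeterminate, $\mathcal{A}=\mathbb{Z}[q,q^{-1}]$, $s_i=(i,i+1)\in\mathfrak{S}_n$, $W=\mathfrak{S}_n$. Let $\underline{\mathfrak{s}}_n$ be the set of $n$-tuples of $r$-th roots of unity with $W$ permuting entries, and $W_\lambda$ the stabilizer of $\lambda$. $\widehat{H}_{r,n}$ is the $\mathcal{A}$-algebra generated by $g_1,\dots,g_{n-1}$, $1_\lambda$ ($\lambda\in\underline{\mathfrak{s}}_n$), $X_1^{\pm1}$ with relations: $g_ig_j=g_jg_i$ ($|i-j|\ge2$); $g_ig_{i+1}g_i=g_{i+1}g_ig_{i+1}$; $g_i1_\lambda=1_{s_i(\lambda)}g_i$; $\sum_\lambda1_\lambda=1$; $1_\lambda1_{\lambda'}=\delta_{\lambda,\lambda'}1_\lambda$; $g_i^2=1+(q-q^{-1})\sum_{\lambda:\,s_i\in W_\lambda}g_i1_\lambda$; $X_1X_1^{-1}=X_1^{-1}X_1=1$; $g_1X_1g_1X_1=X_1g_1X_1g_1$; $g_iX_1=X_1g_i$ ($2\le i\le n-1$); $X_11_\lambda=1_\lambda X_1$. For $\lambda\in\underline{\mathfrak{s}}_n$ let $\lambda^0$ be the unique element of the orbit $W\lambda$ of the form $(\zeta_1,\dots,\zeta_1,\zeta_2,\dots,\zeta_2,\dots,\zeta_r,\dots,\zeta_r)$.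 Let $\Gamma=\{(\lambda_1,\lambda_2)\in\underline{\mathfrak{s}}_n^2\mid W\lambda_1=W\lambda_2\}$. $\widehat{E}_{r,n}$ is the set of formal sums $x=\sum_{(\lambda_1,\lambda_2)\in\Gamma}x_{\lambda_1,\lambda_2}$ with $x_{\lambda_1,\lambda_2}\in 1_{\lambda_1^0}\widehat{H}_{r,n}1_{\lambda_2^0}$, an $\mathcal{A}$-algebra with componentwise addition and product $(xy)_{\lambda_1,\lambda_2}=\sum_{\tilde\lambda\in W\lambda_1}x_{\lambda_1,\tilde\lambda}y_{\tilde\lambda,\lambda_2}$. *)

From HB Require Import structures.
From mathcomp Require Import all_boot all_order all_algebra all_fingroup.
Set Implicit Arguments. Unset Strict Implicit. Unset Printing Implicit Defensive.
Import GRing.Theory.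
Local Open Scope ring_scope.

(* The set s_n of n-tuples of r-th roots of unity: the root zeta_k = zeta^(k-1)
   is encoded by the label (k-1) : 'I_r, so that zeta_1 < ... < zeta_r
   corresponds to the natural order on 'I_r. *)
Notation sn r n := {ffun 'I_n -> 'I_r}.

(* s_i(lambda) for 1 <= i <= n-1 : swap the (1-based) entries i and i+1,
   i.e. the 0-based positions i-1 and i. *)
Definition swapf (r n : nat) (i : nat) (l : sn r n) : sn r n :=
  [ffun j : 'I_n => l (tperm (insubd j i.-1) (insubd j i) j)].

Definition permf (r n : nat) (s : 'S_n) (l : sn r n) : sn r n :=
  [ffun j : 'I_n => l ((s^-1)%g j)].

Definition same_orbit (r n : nat) (l m : sn r n) : bool :=
  [exists s : 'S_n, m == permf s l].

Definition is_standard (r n : nat) (m : sn r n) : bool :=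
  [forall i : 'I_n, forall j : 'I_n, (i <= j)%N ==> (m i <= m j)%N].

Definition lam0 (r n : nat) (l : sn r n) : sn r n :=
  odflt l [pick m | same_orbit l m && is_standard m].

(* An A-algebra, A = Z[q,q^-1], is a ring together with a central unit q
   (image of the indeterminate q); qi is its inverse. *)
Definition Acentral (R : pzRingType) (q qi : R) : Prop :=
  q * qi = 1 /\ qi * q = 1 /\ forall x : R, q * x = x * q.

(* Defining relations of \hat H_{r,n}; g i stands for g_i (1 <= i <= n-1),
   e l for 1_l, X for X_1 and Xi for X_1^{-1}. *)
Definition Hrel (r n : nat) (R : pzRingType) (q qi : R) (g : nat -> R)
    (e : sn r n -> R) (X Xi : R) : Prop :=
  (forall i j, (0 < i < n)%N -> (0 < j < n)%N -> ((i.+2 <= j) || (j.+2 <= i))%N ->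
     g i * g j = g j * g i) /\
  (forall i, (0 < i)%N -> (i.+1 < n)%N -> g i * g i.+1 * g i = g i.+1 * g i * g i.+1) /\
  (forall i (l : sn r n), (0 < i < n)%N -> g i * e l = e (swapf i l) * g i) /\
  (\sum_(l : sn r n) e l = 1) /\
  (forall l m : sn r n, e l * e m = (if l == m then e l else 0)) /\
  (forall i, (0 < i < n)%N ->
     g i ^+ 2 = 1 + (q - qi) * \sum_(l : sn r n | swapf i l == l) g i * e l) /\
  (X * Xi = 1 /\ Xi * X = 1) /\
  ((1 < n)%N -> g 1%N * X * g 1%N * X = X * g 1%N * X * g 1%N) /\
  (forall i, (2 <= i < n)%N -> g i * X = X * g i) /\
  (forall l : sn r n, X * e l = e l * X).

Definition sends (r n : nat) (R C : pzRingType) (f : {rmorphism R -> C})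
    (q : R) (g : nat -> R) (e : sn r n -> R) (X Xi : R)
    (qc : C) (gc : nat -> C) (ec : sn r n -> C) (Xc Xic : C) : Prop :=
  f q = qc /\ (forall i, (0 < i < n)%N -> f (g i) = gc i) /\
  (forall l, f (e l) = ec l) /\ f X = Xc /\ f Xi = Xic.

(* (R, q, g, e, X, Xi) is a presentation of \hat H_{r,n}: the relations hold
   and it is universal (initial) among A-algebras with such elements. *)
Definition Hhat_pres (r n : nat) (R : pzRingType) (q qi : R) (g : nat -> R)
    (e : sn r n -> R) (X Xi : R) : Prop :=
  Acentral q qi /\ Hrel q qi g e X Xi /\
  forall (C : pzRingType) (qc qic : C) (gc : nat -> C) (ec : sn r n -> C) (Xc Xic : C),
    Acentral qc qic -> Hrel qc qic gc ec Xc Xic ->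
    (exists f : {rmorphism R -> C}, sends f q g e X Xi qc gc ec Xc Xic) /\
    (forall f1 f2 : {rmorphism R -> C},
       sends f1 q g e X Xi qc gc ec Xc Xic -> sends f2 q g e X Xi qc gc ec Xc Xic ->
       f1 =1 f2).

(* Elements of \hat E_{r,n}: families x_{l1,l2} indexed by Gamma (we set the
   value 0 outside Gamma) with x_{l1,l2} in 1_{l1^0} H 1_{l2^0}. *)
Definition Ehat_elem (r n : nat) (R : pzRingType) (e : sn r n -> R)
    (x : sn r n -> sn r n -> R) : Prop :=
  forall l1 l2 : sn r n,
    if same_orbit l1 l2 then exists y : R, x l1 l2 = e (lam0 l1) * y * e (lam0 l2)
    else x l1 l2 = 0.

Definition Emul (r n : nat) (R : pzRingType) (x y : sn r n -> sn r n -> R) :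
    sn r n -> sn r n -> R :=
  fun l1 l2 => \sum_(m : sn r n | same_orbit l1 m) x l1 m * y m l2.

Definition Eone (r n : nat) (R : pzRingType) (e : sn r n -> R) :
    sn r n -> sn r n -> R :=
  fun l1 l2 => if l1 == l2 then e (lam0 l1) else 0.

Definition Aalg_iso_to_Ehat (r n : nat) (R : pzRingType) (q : R) (e : sn r n -> R)
    (phi : R -> sn r n -> sn r n -> R) : Prop :=
  (forall x, Ehat_elem e (phi x)) /\
  (forall x y, (forall a b, phi x a b = phi y a b) -> x = y) /\
  (forall z, Ehat_elem e z -> exists x, forall a b, phi x a b = z a b) /\
  (forall x y a b, phi (x + y) a b = phi x a b + phi y a b) /\
  (forall x y a b, phi (x * y) a b = Emul (phi x) (phi y) a b) /\
  (forall x a b, phi (q * x) a b = q * phi x a b) /\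
  (forall a b, phi 1 a b = Eone e a b).

From HB Require Import structures.
From mathcomp Require Import all_boot all_order all_algebra all_fingroup zify.
Set Implicit Arguments. Unset Strict Implicit. Unset Printing Implicit Defensive.
Import GRing.Theory.
Local Open Scope ring_scope.

(* An element commuting with all generators of \hat H_{r,n} is central:
   comparing, through the universal property, the scalar embedding
   with the morphism x |-> [[x, cx - xc], [0, x]] into 2x2 matrices kills the
   commutator.  Hence the orbit sums of the idempotents 1_l are central, so
   1_a x 1_b = 0 whenever a and b lie in different W-orbits.  The elements g_i
   are invertible and conjugate 1_l into 1_{s_i l}; since adjacent
   transpositions generate S_n, every l is conjugate by a unit T_l to 1_{l^0}.
   The units T_l then give matrix units u_l = 1_{l^0} T_l, v_l = T_l^-1 1_{l^0},
   and x |-> (u_a x v_b)_{a,b} is the required isomorphism, with inverse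
   z |-> \sum_{a,b} v_a z_{a,b} u_b. *)

Section Orbits.
Variables r n : nat.
Implicit Types (l m p : sn r n) (s t : 'S_n).

Lemma permfM s t l : permf s (permf t l) = permf (t * s)%g l.
Proof. by apply/ffunP => j; rewrite !ffunE invMg permM. Qed.

Lemma permf1 l : permf 1%g l = l.
Proof. by apply/ffunP => j; rewrite !ffunE invg1 perm1. Qed.

Lemma permfK s l : permf s^-1 (permf s l) = l.
Proof. by rewrite permfM mulgV permf1. Qed.

Lemma same_orbitP l m : reflect (exists s, m = permf s l) (same_orbit l m).
Proof. by apply: (iffP existsP) => [[s /eqP ->]|[s ->]]; exists s. Qed.

Lemma same_orbit_refl l : same_orbit l l.
Proof. by apply/same_orbitP; exists 1%g; rewrite permf1. Qed.

Lemma same_orbit_sym l m : same_orbit l m -> same_orbit m l.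
Proof. by case/same_orbitP => s ->; apply/same_orbitP; exists s^-1%g; rewrite permfK. Qed.

Lemma same_orbit_trans l m p : same_orbit l m -> same_orbit m p -> same_orbit l p.
Proof.
case/same_orbitP => s -> /same_orbitP [t ->].
by apply/same_orbitP; exists (s * t)%g; rewrite permfM.
Qed.

Lemma same_orbit_lam0 l : same_orbit l (lam0 l).
Proof. by rewrite /lam0; case: pickP => [m /andP []|_] //=; apply: same_orbit_refl. Qed.

Lemma swapf_tperm i : (0 < i < n)%N ->
  exists a b : 'I_n, [/\ b = a.+1 :> nat, b = i :> nat & @swapf r n i =1 permf (tperm a b)].
Proof.
case/andP => i_gt0 lt_i_n; have lt_pi_n : (i.-1 < n)%N by lia.
exists (Ordinal lt_pi_n), (Ordinal lt_i_n); split => [/=|//|l]; first by lia.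
apply/ffunP => j; rewrite !ffunE tpermV.
by congr (l (tperm _ _ j)); apply/val_inj; rewrite /= insubdK.
Qed.

Lemma swapfK i : (0 < i < n)%N -> involutive (@swapf r n i).
Proof.
by case/swapf_tperm => a [b [_ _ sw]] l; rewrite !sw permfM tperm2 permf1.
Qed.

Lemma same_orbit_swapf i l : (0 < i < n)%N -> same_orbit l (swapf i l).
Proof. by case/swapf_tperm => a [b [_ _ sw]]; apply/same_orbitP; exists (tperm a b). Qed.

Lemma same_orbit_swapfr i l m :
  (0 < i < n)%N -> same_orbit l (swapf i m) = same_orbit l m.
Proof.
move=> lt_i_n; apply/idP/idP => [/same_orbit_trans|lm]; last first.
  exact/(same_orbit_trans lm)/same_orbit_swapf.
by apply; rewrite -{2}(swapfK lt_i_n m); apply: same_orbit_swapf.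
Qed.

End Orbits.

Lemma perm_adjacent_ind n (P : 'S_n -> Prop) :
  P 1%g -> (forall s t, P s -> P t -> P (s * t)%g) -> (forall s, P s -> P s^-1%g) ->
  (forall a b : 'I_n, b = a.+1 :> nat -> P (tperm a b)) -> forall s, P s.
Proof.
move=> P1 PM PV Padj.
have Pdist k (a b : 'I_n) : b = (a + k)%N :> nat -> P (tperm a b).
  elim: k b => [|k IHk] b def_b.
    have -> : b = a by apply/val_inj => /=; rewrite def_b addn0.
    by rewrite tperm1.
  case: k IHk def_b => [|k] IHk def_b; first by apply: Padj; rewrite def_b addn1.
  have lt_c_n : (a + k.+1 < n)%N by have := ltn_ord b; lia.
  pose c := Ordinal lt_c_n.
  have [ca ba] : c != a /\ b != a.
    by split; apply/eqP => /(congr1 val) /=; lia.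
  have -> : tperm a b = ((tperm c b)^-1 * tperm a c * tperm c b)%g.
    by rewrite -mulgA -conjgE tpermJ tpermL tpermD.
  have Pcb : P (tperm c b) by apply: Padj; rewrite def_b /=; lia.
  by apply/(PM _ _ _ Pcb)/PM/IHk => //; apply: PV.
have Ptperm (a b : 'I_n) : P (tperm a b).
  have [le_ab|lt_ba] := leqP a b; first by apply: (Pdist (b - a)%N); lia.
  by rewrite tpermC; apply: (Pdist (a - b)%N); lia.
move=> s; have [ts -> _] := prod_tpermP s.
by elim: ts => [|t ts IHts]; rewrite ?big_nil ?big_cons //; apply: PM.
Qed.

Lemma Hrel_rmorph r n (R C : pzRingType) (f : {rmorphism R -> C}) (q qi : R)
    (g : nat -> R) (e : sn r n -> R) (X Xi : R) :
  Hrel q qi g e X Xi ->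
  Hrel (f q) (f qi) (f \o g) (f \o e) (f X) (f Xi).
Proof.
case=> [gC [braid [ge [esum [eorth [quad [[XXi XiX] [gX [giX Xe]]]]]]]]].
split; first by move=> i j ? ? ?; rewrite /= -!rmorphM gC.
split; first by move=> i ? ?; rewrite /= -!rmorphM braid.
split; first by move=> i l ?; rewrite /= -!rmorphM ge.
split; first by rewrite -rmorph_sum esum rmorph1.
split; first by move=> l m; rewrite /= -rmorphM eorth; case: eqP; rewrite ?rmorph0.
split.
  move=> i ?; rewrite /= -rmorphXn quad // rmorphD rmorph1 rmorphM rmorphB rmorph_sum.
  by congr (_ + _ * _); apply: eq_bigr => l _; rewrite rmorphM.
split; first by rewrite -!rmorphM XXi XiX rmorph1.
split; first by move=> ?; rewrite /= -!rmorphM gX.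
split; first by move=> i ?; rewrite /= -!rmorphM giX.
by move=> l; rewrite /= -!rmorphM Xe.
Qed.

Lemma Acentral_inv (R : pzRingType) (q qi : R) : Acentral q qi -> forall x, qi * x = x * qi.
Proof.
case=> qqi [qiq q_central] x.
by rewrite -[qi * x]mulr1 -qqi mulrA -(mulrA qi) -q_central !mulrA qiq mul1r.
Qed.

Section CommutatorMatrix.
Variable R : pzRingType.

Lemma ord2_cases (i : 'I_2) : i = 0 \/ i = 1.
Proof. by case: i => [[|[|i]] lt_i2] //; [left|right]; apply: val_inj. Qed.

(* Multiplicative because x |-> cx - xc is a derivation. *)
Definition commutator_mx (c x : R) : 'M[R]_2 :=
  \matrix_(i, j) (if i == j then x else if (i < j)%N then c * x - x * c else 0).

Lemma commutator_mx_is_zmod_morphism c : zmod_morphism (commutator_mx c).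
Proof.
move=> x y; apply/matrixP => i j; rewrite !mxE.
case: (ord2_cases i) => ->; case: (ord2_cases j) => -> /=; rewrite ?subr0 //.
by rewrite mulrBr mulrBl !opprB addrACA [RHS]addrACA [- (c * y) + _]addrC.
Qed.

Lemma commutator_mx_is_monoid_morphism c : monoid_morphism (commutator_mx c).
Proof.
split.
  apply/matrixP => i j; rewrite !mxE.
  by case: (ord2_cases i) => ->; case: (ord2_cases j) => ->; rewrite /= ?mulr1 ?mul1r ?subrr.
move=> x y; apply/matrixP => i j; rewrite !mxE !big_ord_recr big_ord0 /= add0r !mxE.
case: (ord2_cases i) => ->; case: (ord2_cases j) => -> /=; rewrite ?mul0r ?mulr0 ?addr0 ?add0r //.
by rewrite mulrBr mulrBl !mulrA [RHS]addrC addrA subrK.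
Qed.

HB.instance Definition _ c := GRing.isZmodMorphism.Build R 'M[R]_2 (commutator_mx c)
  (commutator_mx_is_zmod_morphism c).
HB.instance Definition _ c := GRing.isMonoidMorphism.Build R 'M[R]_2 (commutator_mx c)
  (commutator_mx_is_monoid_morphism c).

Lemma commutator_mx_comm c x : c * x = x * c -> commutator_mx c x = x%:M.
Proof.
move=> cx; apply/matrixP => i j; rewrite !mxE.
by case: (ord2_cases i) => ->; case: (ord2_cases j) => -> //=; rewrite cx subrr.
Qed.

Lemma scalar_mx_central m (q : R) : (forall x, q * x = x * q) ->
  forall A : 'M[R]_m, q%:M * A = A * q%:M.
Proof.
move=> q_central A; rewrite [LHS]mul_scalar_mx; apply/matrixP => i j.
rewrite !mxE (bigD1 j) //= big1 => [|k /negbTE kj]; last by rewrite mxE kj mulr0n mulr0.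
by rewrite mxE eqxx mulr1n addr0 q_central.
Qed.

End CommutatorMatrix.

Lemma Hhat_pres_central r n (R : pzRingType) (q qi : R) (g : nat -> R)
    (e : sn r n -> R) (X Xi : R) :
  Hhat_pres q qi g e X Xi -> forall c : R,
  (forall i, (0 < i < n)%N -> c * g i = g i * c) -> (forall l, c * e l = e l * c) ->
  c * X = X * c -> c * Xi = Xi * c -> forall x, c * x = x * c.
Proof.
case=> Aq [rel univ] c cg ce cX cXi x.
have [qqi [qiq q_central]] := Aq.
pose f : {rmorphism R -> 'M[R]_2} := @scalar_mx R 2.
have Afq : Acentral (f q) (f qi).
  by rewrite /Acentral -!rmorphM qqi qiq rmorph1; do !split; apply: scalar_mx_central.
have [_ /(_ f (commutator_mx c)) uniq] := univ _ _ _ _ _ _ _ Afq (Hrel_rmorph f rel).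
have /(_ x) /matrixP /(_ 0 1) : f =1 commutator_mx c.
  apply: uniq; first by do !split.
  split; first exact/commutator_mx_comm/esym/q_central.
  split; first by move=> i /cg /commutator_mx_comm.
  split; first by move=> l; apply/commutator_mx_comm.
  by split; apply/commutator_mx_comm.
by rewrite /= !mxE /= mulr0n => /eqP; rewrite eq_sym subr_eq0 => /eqP.
Qed.

Section Intertwiners.
Variables (r n : nat) (R : pzRingType) (e : sn r n -> R).
Implicit Types (s t : 'S_n).

Definition intertwined s := exists T Ti : R,
  [/\ T * Ti = 1, Ti * T = 1 & forall l, T * e l = e (permf s l) * T].

Lemma intertwined1 : intertwined 1%g.
Proof. by exists 1, 1; split; rewrite ?mulr1 // => l; rewrite permf1 mulr1 mul1r. Qed.

Lemma intertwinedM s t : intertwined s -> intertwined t -> intertwined (s * t)%g.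
Proof.
move=> [Ts [Tsi [TsK TsiK Tse]]] [Tt [Tti [TtK TtiK Tte]]].
exists (Tt * Ts), (Tsi * Tti); split.
- by rewrite mulrA -(mulrA Tt) TsK mulr1 TtK.
- by rewrite mulrA -(mulrA Tsi) TtiK mulr1 TsiK.
- by move=> l; rewrite -mulrA Tse mulrA Tte permfM mulrA.
Qed.

Lemma intertwinedV s : intertwined s -> intertwined s^-1%g.
Proof.
move=> [T [Ti [TK TiK Te]]]; exists Ti, T; split => // l.
have -> : e l = e (permf s (permf s^-1 l)) by rewrite permfM mulVg permf1.
by rewrite -[LHS]mulr1 -TK mulrA -(mulrA Ti) -Te mulrA TiK mul1r.
Qed.

Lemma Hrel_intertwined (q qi : R) (g : nat -> R) (X Xi : R) :
  Acentral q qi -> Hrel q qi g e X Xi -> forall s, intertwined s.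
Proof.
move=> Aq [_ [_ [ge [_ [_ [quad _]]]]]].
apply: perm_adjacent_ind; [exact: intertwined1 | exact: intertwinedM | exact: intertwinedV|].
move=> a b def_b; have b_range : (0 < b < n)%N by rewrite ltn_ord andbT def_b.
have [a' [b' [def_b' eq_b' sw]]] := swapf_tperm r b_range.
have [ea eb] : a' = a /\ b' = b by split; apply/val_inj => /=; lia.
subst a' b'.
have dq_central x : (q - qi) * x = x * (q - qi).
  by rewrite mulrBl mulrBr Aq.2.2 (Acentral_inv Aq).
pose F := \sum_(l : sn r n | swapf b l == l) e l.
have gF : g b * F = \sum_(l : sn r n | swapf b l == l) g b * e l by rewrite mulr_sumr.
have Fg : F * g b = \sum_(l : sn r n | swapf b l == l) g b * e l.
  by rewrite mulr_suml; apply: eq_bigr => l /eqP swl; rewrite ge // swl.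
(* g_b^2 = 1 + (q - qi) g_b F with F commuting with g_b, so g_b - (q - qi) F inverts g_b *)
exists (g b), (g b - (q - qi) * F); split.
- by rewrite mulrBr mulrA -dq_central -mulrA gF -expr2 quad // addrK.
- by rewrite mulrBl -mulrA Fg -expr2 quad // addrK.
- by move=> l; rewrite ge // sw.
Qed.

End Intertwiners.

Section OrthogonalIdempotents.
Variables (I : finType) (R : pzRingType) (e : I -> R).
Hypothesis e_orth : forall l m, e l * e m = if l == m then e l else 0.

Lemma orth_idem_suml (P : pred I) b :
  (\sum_(m | P m) e m) * e b = if P b then e b else 0.
Proof.
rewrite mulr_suml; under eq_bigr do rewrite e_orth.
rewrite -big_mkcondr; case: ifP => Pb; [rewrite (big_pred1 b) | rewrite big_pred0] => // m /=.
  by case: eqP => [->|_]; rewrite ?Pb ?andbT ?andbF.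
by case: eqP => [->|_]; rewrite ?Pb ?andbF.
Qed.

Lemma orth_idem_sumr (P : pred I) b :
  e b * (\sum_(m | P m) e m) = if P b then e b else 0.
Proof.
rewrite mulr_sumr; under eq_bigr do rewrite e_orth eq_sym.
rewrite -big_mkcondr; case: ifP => Pb; [rewrite (big_pred1 b) | rewrite big_pred0] => // m /=.
  by case: eqP => [->|_]; rewrite ?Pb ?andbT ?andbF.
by case: eqP => [->|_]; rewrite ?Pb ?andbF.
Qed.

End OrthogonalIdempotents.

Lemma Hhat_pres_orbit_block r n (R : pzRingType) (q qi : R) (g : nat -> R)
    (e : sn r n -> R) (X Xi : R) :
  Hhat_pres q qi g e X Xi ->
  forall (a b : sn r n) (x : R), ~~ same_orbit a b -> e a * x * e b = 0.
Proof.
move=> pres; have [_ [[_ [_ [ge [_ [eorth [_ [[XXi XiX] [_ [_ Xe]]]]]]]]] _]] := pres.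
pose E a := \sum_(m | same_orbit a m) e m.
have E_central a x : E a * x = x * E a.
  apply: (Hhat_pres_central pres) => [i lt_i_n|l||].
  - rewrite mulr_suml mulr_sumr; under [RHS]eq_bigr do rewrite ge //.
    rewrite [RHS](reindex_inj (inv_inj (swapfK lt_i_n))) /=.
    by apply: eq_big => [m|m _]; rewrite ?swapfK ?same_orbit_swapfr.
  - by rewrite orth_idem_suml // orth_idem_sumr.
  - by rewrite mulr_suml mulr_sumr; apply: eq_bigr => m _; rewrite Xe.
  - rewrite mulr_suml mulr_sumr; apply: eq_bigr => m _.
    by rewrite -[LHS]mul1r -XiX -mulrA (mulrA X) Xe -(mulrA (e m)) XXi mulr1.
move=> a b x not_ab.
have -> : e a = e a * E a by rewrite orth_idem_sumr // same_orbit_refl.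
by rewrite -(mulrA (e a)) E_central -!mulrA orth_idem_suml // (negbTE not_ab) !mulr0.
Qed.

Section BlockIsomorphism.
Variables (r n : nat) (R : pzRingType) (q : R) (e T Ti : sn r n -> R).
Hypothesis q_central : forall x, q * x = x * q.
Hypothesis e_sum : \sum_l e l = 1.
Hypothesis e_orth : forall l m, e l * e m = if l == m then e l else 0.
Hypothesis e_orbit_block : forall a b x, ~~ same_orbit a b -> e a * x * e b = 0.
Hypotheses (TK : forall l, T l * Ti l = 1) (TiK : forall l, Ti l * T l = 1).
Hypothesis T_lam0 : forall l, T l * e l = e (lam0 l) * T l.
Implicit Types (a b c d l m : sn r n) (x y : R).

Let u l := e (lam0 l) * T l.
Let v l := Ti l * e (lam0 l).

Definition block_entries x a b := if same_orbit a b then u a * x * v b else 0.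

Let block_sum (z : sn r n -> sn r n -> R) := \sum_a \sum_b v a * z a b * u b.

Lemma block_e_idem l : e l * e l = e l.
Proof. by rewrite e_orth eqxx. Qed.

Lemma block_uE l : u l = T l * e l.
Proof. by rewrite T_lam0. Qed.

Lemma block_vE l : v l = e l * Ti l.
Proof.
by rewrite /v -[RHS]mul1r -(TiK l) -mulrA (mulrA (T l)) T_lam0 -(mulrA (e _)) TK mulr1.
Qed.

Lemma block_vu l : v l * u l = e l.
Proof. by rewrite block_vE block_uE mulrA -(mulrA (e l)) TiK mulr1 block_e_idem. Qed.

Lemma block_uv a b : u a * v b = if a == b then e (lam0 a) else 0.
Proof.
rewrite block_uE block_vE mulrA -(mulrA (T a)) e_orth.
case: eqP => [<-|_]; last by rewrite mulr0 mul0r.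
by rewrite -block_uE -mulrA TK mulr1.
Qed.

Lemma block_u_orbit0 a m x : ~~ same_orbit a m -> u a * x * e m = 0.
Proof. by move=> not_am; rewrite block_uE -!mulrA (mulrA (e a)) e_orbit_block ?mulr0. Qed.

Lemma block_u_mul_sumv a (w : sn r n -> R) : u a * \sum_c v c * w c = e (lam0 a) * w a.
Proof.
rewrite mulr_sumr (bigD1 a) //= big1 => [|c ca].
  by rewrite mulrA block_uv eqxx addr0.
by rewrite mulrA block_uv eq_sym (negbTE ca) mul0r.
Qed.

Lemma block_sumu_mul_v (w : sn r n -> R) b : (\sum_d w d * u d) * v b = w b * e (lam0 b).
Proof.
rewrite mulr_suml (bigD1 b) //= big1 => [|d db].
  by rewrite -mulrA block_uv eqxx addr0.
by rewrite -mulrA block_uv (negbTE db) mulr0.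
Qed.

Lemma block_entries_Ehat x : Ehat_elem e (block_entries x).
Proof.
move=> a b; rewrite /block_entries; case: ifP => -> //.
by exists (T a * x * Ti b); rewrite !mulrA.
Qed.

Lemma block_entriesK x : block_sum (block_entries x) = x.
Proof.
have entry a b : v a * block_entries x a b * u b = e a * x * e b.
  rewrite /block_entries; case: ifP => [_|/negbT ab].
    have -> : v a * (u a * x * v b) * u b = v a * u a * x * (v b * u b) by rewrite !mulrA.
    by rewrite !block_vu.
  by rewrite e_orbit_block // mulr0 mul0r.
rewrite /block_sum; under eq_bigr do under eq_bigr do rewrite entry.
rewrite -[RHS]mul1r -[RHS]mulr1 -e_sum !mulr_suml.
by apply: eq_bigr => a _; rewrite mulr_sumr.
Qed.

Lemma block_sumK z : Ehat_elem e z -> forall a b, block_entries (block_sum z) a b = z a b.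
Proof.
move=> Ez a b; rewrite /block_entries; have := Ez a b.
case: ifP => [_ [y zab]|_ ->] //.
rewrite /block_sum; under eq_bigr => c _ do (under eq_bigr do rewrite -mulrA; rewrite -mulr_sumr).
rewrite block_u_mul_sumv -mulrA block_sumu_mul_v zab.
by rewrite !mulrA block_e_idem -mulrA block_e_idem.
Qed.

Lemma block_entriesD x y a b :
  block_entries (x + y) a b = block_entries x a b + block_entries y a b.
Proof. by rewrite /block_entries; case: ifP; rewrite ?addr0 // mulrDr mulrDl. Qed.

Lemma block_entriesM x y a b :
  block_entries (x * y) a b = Emul (block_entries x) (block_entries y) a b.
Proof.
rewrite /Emul /block_entries; case: ifP => ab; last first.
  rewrite big1 // => m am; rewrite am; case: ifP => [mb|_]; last by rewrite mulr0.
  by rewrite (same_orbit_trans am mb) in ab.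
transitivity (\sum_m u a * x * e m * y * v b).
  by rewrite -!mulr_suml -mulr_sumr e_sum mulr1 !mulrA.
rewrite (bigID (same_orbit a)) /= [X in _ + X]big1 ?addr0 => [|m /block_u_orbit0 ->]; last first.
  by rewrite !mul0r.
apply: eq_bigr => m am; rewrite am (same_orbit_trans (same_orbit_sym am) ab).
have -> : u a * x * v m * (u m * y * v b) = u a * x * (v m * u m) * y * v b.
  by rewrite !mulrA.
by rewrite block_vu.
Qed.

Lemma block_entriesZ x a b : block_entries (q * x) a b = q * block_entries x a b.
Proof.
by rewrite /block_entries; case: ifP; rewrite ?mulr0 // (mulrA (u a)) -q_central !mulrA.
Qed.

Lemma block_entries1 a b : block_entries 1 a b = Eone e a b.
Proof.
rewrite /block_entries /Eone mulr1 block_uv; case: ifP => [_|]; first by case: eqP.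
by case: eqP => // ->; rewrite same_orbit_refl.
Qed.

Lemma block_entries_iso : Aalg_iso_to_Ehat q e block_entries.
Proof.
split; first exact: block_entries_Ehat.
split.
  move=> x y xy; rewrite -(block_entriesK x) -(block_entriesK y).
  by apply: eq_bigr => a _; apply: eq_bigr => b _; rewrite xy.
split; first by move=> z /block_sumK; exists (block_sum z).
split; first exact: block_entriesD.
split; first exact: block_entriesM.
by split; [exact: block_entriesZ | exact: block_entries1].
Qed.

End BlockIsomorphism.

Theorem theorem5p1 (r n : nat) (hr : (0 < r)%N) (hn : (0 < n)%N)
    (R : pzRingType) (q qi : R) (g : nat -> R) (e : {ffun 'I_n -> 'I_r} -> R)
    (X Xi : R) :
  Hhat_pres q qi g e X Xi ->
  exists phi : R -> {ffun 'I_n -> 'I_r} -> {ffun 'I_n -> 'I_r} -> R,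
    Aalg_iso_to_Ehat q e phi.
Proof.
move=> pres; have [Aq [rel _]] := pres.
have [_ [_ [_ [e_sum [e_orth _]]]]] := rel.
have /fin_all_exists [TTi TTiP] : forall l : sn r n, exists TTi : R * R,
    [/\ TTi.1 * TTi.2 = 1, TTi.2 * TTi.1 = 1 & TTi.1 * e l = e (lam0 l) * TTi.1].
  move=> l; have /same_orbitP [s ->] := same_orbit_lam0 l.
  have [T [Ti [TK TiK Te]]] := Hrel_intertwined Aq rel s.
  by exists (T, Ti).
exists (block_entries e (fun l => (TTi l).1) (fun l => (TTi l).2)).
apply: block_entries_iso => //; first exact: Aq.2.2; first exact: Hhat_pres_orbit_block pres.
all: by move=> l; case: (TTiP l).
Qed.
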